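(* Let $M$ be a finite matroid, $k\ge0$, let $e_1,\dots,e_k$ be distinct elements of $M$ and $C_0,C_1,\dots,C_k$ subsets of $M$ such that $|C_i|\ge3$ for $i=0,\dots,k$, $C_{i-1}\cap C_i=\{e_i\}$ for $i=1,\dots,k$, and $C_i\cap C_j=\emptyset$ whenever $|i-j|\ge2$. Let $e_0\in C_0\setminus\{e_1\}$ and, for $i=1,\dots,k$, let $e_i'\in C_{i-1}\setminus\{e_{i-1},e_i\}$. Define $M_0=M$ and $M_i=M_{i-1}/(C_{i-1}\setminus\{e_i,e_i'\})$ for $i=1,\dots,k$. If $C_i$ is a circuit in $M_i$ for every $i=0,1,\dots,k$, then $M$ contains a circuit of length at least $k+3$ that contains $e_0$.
   Context: For a finite matroid $M$ with rank function $r_M$ and $F\subseteq M$, the contraction $M/F$ has ground set $M\setminus F$, and $F'\subseteq M\setminus F$ is independent in $M/F$ iff $F'$ is independent in $M$ and $r_M(F\cup F')=r_M(F)+r_M(F')$. A circuit is a minimal dependent set; its length is its number of elements. *)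

From mathcomp Require Import all_boot.
Set Implicit Arguments. Unset Strict Implicit. Unset Printing Implicit Defensive.

Record mat (T : finType) := Mat { mground : {set T}; mindep : {set T} -> bool }.

Section Matroid.
Variable T : finType.

Definition is_matroid (M : mat T) : Prop :=
  [/\ mindep M set0,
      (forall A : {set T}, mindep M A -> A \subset mground M),
      (forall A B : {set T}, mindep M B -> A \subset B -> mindep M A)
    & (forall A B : {set T}, mindep M A -> mindep M B -> #|A| < #|B| ->
         exists2 x, x \in B :\: A & mindep M (x |: A))].

Definition mrank (M : mat T) (X : {set T}) : nat :=
  \max_(Y in powerset X | mindep M Y) #|Y|.

Definition contract (M : mat T) (F : {set T}) : mat T :=
  Mat (mground M :\: F)
      (fun F' => [&& F' \subset mground M :\: F, mindep M F' &
                   mrank M (F :|: F') == mrank M F + mrank M F']).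

Definition circuit (M : mat T) (C : {set T}) : Prop :=
  [/\ C \subset mground M, ~~ mindep M C &
      forall D : {set T}, D \proper C -> mindep M D].

Fixpoint Mseq (M : mat T) (C : nat -> {set T}) (e e' : nat -> T) (i : nat)
  : mat T :=
  match i with
  | 0 => M
  | j.+1 => contract (Mseq M C e e' j) (C j :\: [set e j.+1; e' j.+1])
  end.

End Matroid.

From mathcomp Require Import all_boot.
Set Implicit Arguments. Unset Strict Implicit. Unset Printing Implicit Defensive.

(* Contracting F := C_0 \ {e_1, e'_1} turns the chain into a
   chain of length k - 1 in M/F, which by induction has a circuit D through e_1
   with |D| >= k + 2.  Such a circuit lifts to a longer circuit of M through
   e_0: with Z := D \ e_1, the set F u Z is independent, and the circuit C_0
   makes e_1 and e'_1 interchangeable over any set containing F.  Hence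
   x u F u Z is dependent for x in {e_1, e'_1}, and for a suitable x it becomes
   independent after deleting x, e_0 or any element of Z, so its circuit
   contains all of them. *)

Section MatroidFacts.
Variable T : finType.
Implicit Types (M : mat T) (A B C D F S X : {set T}).

Lemma indepS M A B : is_matroid M -> mindep M B -> A \subset B -> mindep M A.
Proof. by case=> _ _ + _; apply. Qed.

Lemma mrank_le_card M X : mrank M X <= #|X|.
Proof. by apply/bigmax_leqP => Y /andP[]; rewrite inE => /subset_leq_card. Qed.

Lemma mrank_indep M X : mindep M X -> mrank M X = #|X|.
Proof.
move=> indX; apply/eqP; rewrite eqn_leq mrank_le_card.
by apply: leq_bigmax_cond; rewrite powersetE subxx.
Qed.

Lemma mrank_card_indep M X : is_matroid M -> mrank M X = #|X| -> mindep M X.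
Proof.
move=> matM; rewrite /mrank.
have [|Y /andP[]] := eq_bigmax_cond (fun Y : {set T} => #|Y|)
  (A := [pred Y | (Y \in powerset X) && mindep M Y]).
  by apply/card_gt0P; exists set0; rewrite inE /= powersetE sub0set; case: matM.
rewrite powersetE => YX indY -> cardY.
by have /eqP <- : Y == X by rewrite eqEcard YX cardY /=.
Qed.

Lemma contract_indepE M F X : is_matroid M -> mindep M F ->
  mindep (contract M F) X = (X \subset mground M :\: F) && mindep M (F :|: X).
Proof.
move=> matM indF; rewrite /contract /=; case XEF: (X \subset _) => //=.
have disjFX : [disjoint F & X].
  by move: XEF; rewrite subsetD disjoint_sym => /andP[].
apply/andP/idP => [[indX /eqP rFX] | indFX].
  apply: mrank_card_indep => //; apply/eqP; rewrite eqn_leq mrank_le_card.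
  by rewrite rFX !mrank_indep // cardsU leq_subr.
have indX := indepS matM indFX (subsetUr F X).
by rewrite indX !mrank_indep // cardsU (disjoint_setI0 disjFX) cards0 subn0.
Qed.

Lemma contract_matroid M F : is_matroid M -> mindep M F -> is_matroid (contract M F).
Proof.
move=> matM indF; have [_ _ _ augM] := matM.
have indE := contract_indepE _ matM indF.
split=> [|A|A B|A B]; rewrite ?indE.
- by rewrite sub0set setU0.
- by case/andP.
- by case/andP=> BEF indFB AB; rewrite (subset_trans AB BEF) (indepS matM indFB) ?setUS.
case/andP=> AEF indFA /andP[BEF indFB] ltAB.
have cardFU (Y : {set T}) : Y \subset mground M :\: F -> #|F :|: Y| = #|F| + #|Y|.
  by rewrite subsetD => /andP[_ /disjoint_setI0]; rewrite cardsU setIC => ->; rewrite cards0 subn0.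
have [|x] := augM _ _ indFA indFB; first by rewrite !cardFU // ltn_add2l.
rewrite inE !in_setU negb_or => /andP[/andP[xF xA] /orP[/(negP xF)//|xB]] indxFA.
exists x; first by rewrite inE xA xB.
by rewrite indE setUCA indxFA subUset sub1set (subsetP BEF) ?AEF.
Qed.

Lemma indep_extend M A B : is_matroid M -> mindep M A -> mindep M B ->
  exists2 A', mindep M A' & [/\ A \subset A', A' \subset A :|: B & #|B| <= #|A'|].
Proof.
move=> matM; have [_ _ _ augM] := matM.
move: {2}(#|B| - #|A|) (leqnn (#|B| - #|A|)) => n.
elim: n A => [|n IHn] A gapA indA indB.
  by exists A; rewrite // subsetUl -subn_eq0 -leqn0.
have [leBA|ltAB] := leqP #|B| #|A|; first by exists A; rewrite // subsetUl.
have [x /setDP[xB xA] indxA] := augM _ _ indA indB ltAB.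
have [|A' indA' [xAA' A'sub leBA']] := IHn (x |: A) _ indxA indB.
  by rewrite cardsU1 xA add1n subnS -ltnS prednK ?subn_gt0.
exists A' => //; split=> //; first exact: subset_trans (subsetUr _ _) xAA'.
by apply: subset_trans A'sub _; rewrite subUset subUset sub1set !inE xB orbT subsetUl subsetUr.
Qed.

Lemma dep_circuit M S : S \subset mground M -> ~~ mindep M S ->
  exists2 D, circuit M D & D \subset S.
Proof.
move=> SE depS.
have [D /minsetP[depD minD] DS] := minset_exists (P := [pred X | ~~ mindep M X]) depS.
exists D => //; split=> [|//|X ltXD]; first exact: subset_trans DS SE.
have XD := proper_sub ltXD; apply: contraTT ltXD => depX.
by rewrite (minD X depX XD) properxx.
Qed.

Lemma circuit_memD1 M D S y : is_matroid M -> circuit M D -> D \subset S ->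
  mindep M (S :\ y) -> y \in D.
Proof.
move=> matM [_ depD _] DS; apply: contraLR => yD; apply: contraNN depD => indSy.
by apply: indepS matM indSy _; rewrite subsetD1 DS.
Qed.

Lemma circuit_indep_swap M C X a b : is_matroid M -> circuit M C ->
  a \in C -> a \notin X -> C :\ a \subset b |: X ->
  mindep M (a |: X) -> mindep M (b |: X).
Proof.
move=> matM [_ depC minC] aC aX CaX indaX.
have [A' indA' [CaA' A'sub leA']] := indep_extend matM (minC _ (properD1 aC)) indaX.
have aA' : a \notin A'.
  apply: contraNN depC => aA'; apply: indepS matM indA' _.
  by rewrite -(setD1K aC) subUset sub1set aA'.
have A'bX : A' \subset b |: X.
  apply/subsetP => x xA'; have /setUP[/(subsetP CaX)//|] := subsetP A'sub x xA'.
  by rewrite !in_setU1 => /orP[/eqP xa|->]; [rewrite -xa xA' in aA' | rewrite orbT].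
suff /eqP <- : A' == b |: X by [].
rewrite eqEcard A'bX (leq_trans _ leA') // !cardsU1 aX leq_add2r.
by case: (b \notin X).
Qed.

Lemma circuit_contract M F D : is_matroid M -> mindep M F ->
  circuit (contract M F) D ->
  [/\ D \subset mground M :\: F, ~~ mindep M (F :|: D) &
      forall X, X \proper D -> mindep M (F :|: X)].
Proof.
move=> matM indF [DEF depD minD]; have indE := contract_indepE _ matM indF.
rewrite indE DEF in depD; split=> // X ltXD.
by have := minD X ltXD; rewrite indE => /andP[].
Qed.

End MatroidFacts.

Section CircuitLift.
Variables (T : finType) (M : mat T) (C D : {set T}) (a b e0 : T).
Hypotheses (matM : is_matroid M) (circC : circuit M C).
Hypotheses (aC : a \in C) (bC : b \in C) (e0C : e0 \in C).
Hypotheses (ab : a != b) (e0a : e0 != a) (e0b : e0 != b).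
Implicit Types (X : {set T}) (x y : T).
Let F := C :\: [set a; b].
Hypotheses (circD : circuit (contract M F) D) (aD : a \in D) (D3 : 3 <= #|D|).

Let FC : F \subset C. Proof. exact: subsetDl. Qed.
Let e0F : e0 \in F. Proof. by rewrite !inE negb_or e0a e0b. Qed.

Let indF : mindep M F.
Proof.
have [_ _ minC] := circC; apply: minC; rewrite properE FC.
by apply/subsetPn; exists a; rewrite ?inE ?eqxx.
Qed.

Let DEF : D \subset mground M :\: F.
Proof. by case: (circuit_contract matM indF circD). Qed.
Let depFD : ~~ mindep M (F :|: D).
Proof. by case: (circuit_contract matM indF circD). Qed.
Let indFX (X : {set T}) : X \proper D -> mindep M (F :|: X).
Proof. by case: (circuit_contract matM indF circD) => _ _; apply. Qed.

Lemma notin_contract_circuit : b \notin D.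
Proof.
have [_ depC _] := circC; apply: contraNN depC => bD.
apply: indepS matM (indFX (_ : [set a; b] \proper D)) _.
  by rewrite properEcard subUset !sub1set aD bD cards2 ab.
by apply/subsetP => y yC; rewrite !inE yC; case: (y == a); case: (y == b).
Qed.

Let Z := D :\ a.
Let ZEF : Z \subset mground M :\: F.
Proof. exact: subset_trans (subsetDl _ _) DEF. Qed.
Let notin_FZ x : x \in [set a; b] -> x \notin F :|: Z.
Proof.
rewrite !inE => /orP[]/eqP->; rewrite ?eqxx ?(negbTE notin_contract_circuit) ?orbT //=.
by rewrite eq_sym (negbTE ab).
Qed.

Let indep_swap x X : x \in [set a; b] -> F \subset X -> X \subset F :|: Z ->
  mindep M (x |: X) = mindep M (a |: X).
Proof.
move=> xab FX XFZ; have notinX y : y \in [set a; b] -> y \notin X.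
  by move=> yab; apply: contraNN (notin_FZ yab); apply: (subsetP XFZ).
have CX y : y \in C -> y != a -> y != b -> y \in X.
  by move=> yC ya yb; apply: (subsetP FX); rewrite !inE negb_or ya yb.
move: xab; rewrite !inE => /orP[]/eqP-> //.
apply/idP/idP; apply: (circuit_indep_swap matM circC);
  rewrite ?notinX ?inE ?eqxx ?orbT //; apply/subsetP => y /setD1P[yx yC];
  rewrite in_setU1; case: eqVneq => //= yz; exact: CX.
Qed.

Let dep_FZ x : x \in [set a; b] -> ~~ mindep M (x |: (F :|: Z)).
Proof. by move=> xab; rewrite indep_swap ?subsetUl // setUCA setD1K. Qed.

Let indep_FZ : mindep M (F :|: Z).
Proof. exact: indFX (properD1 aD). Qed.

Let indep_FZD1 x z : x \in [set a; b] -> z \in Z -> mindep M (x |: (F :|: (Z :\ z))).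
Proof.
move=> xab /setD1P[za zD].
rewrite indep_swap ?subsetUl ?setUS ?subsetDl //.
apply: indepS matM (indFX (properD1 zD)) _.
by rewrite setUCA setUS // subUset sub1set !inE aD eq_sym za setSD ?subsetDl.
Qed.

(* e0 is spanned by C :\ e0, so the rank lost by deleting e0 from F :|: Z is
   recovered inside C, necessarily by an element of C :\: F = [set a; b]. *)
Let exists_indep_swap : exists2 x, x \in [set a; b] & mindep M (x |: ((F :|: Z) :\ e0)).
Proof.
have [_ depC minC] := circC; have [_ _ _ augM] := matM.
have [A' indA' [CA' A'sub leA']] := indep_extend matM (minC _ (properD1 e0C)) indep_FZ.
have e0A' : e0 \notin A'.
  apply: contraNN depC => e0A'; apply: indepS matM indA' _.
  by rewrite -(setD1K e0C) subUset sub1set e0A'.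
have indFZe0 : mindep M ((F :|: Z) :\ e0) by apply: indepS matM indep_FZ (subsetDl _ _).
have [|x /setDP[xA' xFZe0] indx] := augM _ _ indFZe0 indA'.
  by apply: leq_trans leA'; rewrite (cardsD1 e0 (F :|: Z)) inE e0F.
exists x => //; have xe0 : x != e0 by apply: contraNneq e0A' => <-.
have xFZ : x \notin F :|: Z by move: xFZe0; rewrite in_setD1 xe0.
have /setUP[/setD1P[_ xC]|] := subsetP A'sub x xA'; last by rewrite (negbTE xFZ).
by apply: contraR xFZ => xab; rewrite in_setU in_setD xab xC.
Qed.

Lemma circuit_lift : exists D', [/\ circuit M D', #|D| < #|D'| & e0 \in D'].
Proof.
have [x xab indx] := exists_indep_swap.
have [CE _ _] := circC.
have xC : x \in C by move: xab; rewrite !inE => /orP[]/eqP->.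
set S := x |: (F :|: Z).
have SE : S \subset mground M.
  rewrite !subUset sub1set (subsetP CE) // (subset_trans FC CE).
  by apply: subset_trans ZEF (subsetDl _ _).
have [D' circD' D'S] := dep_circuit SE (dep_FZ xab).
have memD' y : mindep M (S :\ y) -> y \in D' := circuit_memD1 matM circD' D'S.
have xD' : x \in D'.
  by apply: memD'; apply: indepS matM indep_FZ _; rewrite /S setU1K ?notin_FZ ?subsetDl.
have e0D' : e0 \in D'.
  apply: memD'; apply: indepS matM indx _.
  by rewrite /S setDUl setSU ?subsetDl.
have ZD' : Z \subset D'.
  apply/subsetP => z zZ; apply: memD'; apply: indepS matM (indep_FZD1 xab zZ) _.
  by rewrite /S !setDUl setUSS ?setSU ?subsetDl.
have e0Z : e0 \notin Z by apply/negP => /(subsetP ZEF) /setDP[_ /negP].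
have xe0Z : x \notin e0 |: Z.
  by apply: contraNN (notin_FZ xab); rewrite in_setU1 in_setU => /orP[/eqP->|->]; rewrite ?e0F ?orbT.
exists D'; split => //; apply: leq_trans (subset_leq_card (_ : x |: (e0 |: Z) \subset D')).
  by rewrite (cardsD1 a D) aD !cardsU1 xe0Z e0Z.
by rewrite !subUset !sub1set xD' e0D' ZD'.
Qed.

End CircuitLift.

Lemma Mseq_contract (T : finType) (M : mat T) C e e' i :
  Mseq M C e e' i.+1 = Mseq (contract M (C 0 :\: [set e 1; e' 1]))
     (fun j => C j.+1) (fun j => e j.+1) (fun j => e' j.+1) i.
Proof. by elim: i => //= i ->. Qed.

Lemma circuit_chain_long (T : finType) k (M : mat T) (e e' : nat -> T) (C : nat -> {set T}) :
  is_matroid M ->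
  (forall i, i < k -> e i != e i.+1) ->
  e 0 \in C 0 ->
  (forall i, i < k -> (e i.+1 \in C i) && (e i.+1 \in C i.+1)) ->
  (forall i, i <= k -> 3 <= #|C i|) ->
  (forall i, i < k -> e' i.+1 \in C i :\: [set e i; e i.+1]) ->
  (forall i, i <= k -> circuit (Mseq M C e e' i) (C i)) ->
  exists D, [/\ circuit M D, k + 3 <= #|D| & e 0 \in D].
Proof.
elim: k M e e' C => [|k IHk] M e e' C matM ee1 e0C eC C3 e'C circC.
  by exists (C 0); split; [apply: circC | apply: C3 |].
have /andP[e1C0 e1C1] := eC 0 isT.
have := e'C 0 isT; rewrite !inE negb_or => /andP[/andP[e0e' e1e'] e'C0].
rewrite eq_sym in e0e'; rewrite eq_sym in e1e'.
set F := C 0 :\: [set e 1; e' 1].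
have indF : mindep M F.
  have [_ _ minC] := circC 0 isT; apply: minC; rewrite properE subsetDl.
  by apply/subsetPn; exists (e 1); rewrite ?inE ?eqxx.
have circF i : i <= k -> circuit (Mseq (contract M F) (fun j => C j.+1)
    (fun j => e j.+1) (fun j => e' j.+1) i) (C i.+1).
  by move=> ki; rewrite -Mseq_contract; apply: circC.
have [D' [circD' leD' e1D']] := IHk (contract M F) (fun j => e j.+1) (fun j => e' j.+1)
  (fun j => C j.+1) (contract_matroid matM indF) (fun i => ee1 i.+1) e1C1
  (fun i => eC i.+1) (fun i => C3 i.+1) (fun i => e'C i.+1) circF.
have [D [circD ltD e0D]] := circuit_lift matM (circC 0 isT) e1C0 e'C0 e0C
  e1e' (ee1 0 isT) e0e' circD' e1D' (leq_trans (leq_addl _ _) leD').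
by exists D; split => //; rewrite addSn (leq_ltn_trans leD').
Qed.

Theorem lemma3p12 (T : finType) (M : mat T) (k : nat)
  (e e' : nat -> T) (C : nat -> {set T}) :
  is_matroid M ->
  (forall i, 1 <= i <= k -> e i \in mground M) ->
  (forall i j, 1 <= i <= k -> 1 <= j <= k -> e i = e j -> i = j) ->
  (forall i, i <= k -> C i \subset mground M) ->
  (forall i, i <= k -> 3 <= #|C i|) ->
  (forall i, 1 <= i <= k -> C i.-1 :&: C i = [set e i]) ->
  (forall i j, i <= k -> j <= k -> i + 2 <= j -> C i :&: C j = set0) ->
  e 0 \in C 0 :\ e 1 ->
  (forall i, 1 <= i <= k -> e' i \in C i.-1 :\: [set e i.-1; e i]) ->
  (forall i, i <= k -> circuit (Mseq M C e e' i) (C i)) ->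
  exists D : {set T}, [/\ circuit M D, k + 3 <= #|D| & e 0 \in D].
Proof.
move=> matM _ e_inj _ C3 CC _ /setD1P[e0e1 e0C] e'C circC.
apply: circuit_chain_long matM _ e0C _ C3 (fun i ki => e'C i.+1 ki) circC.
- case=> [//|i] ki; apply/eqP => /(e_inj i.+1 i.+2 (ltnW ki) ki)/eqP.
  by rewrite eqSS ltn_eqF.
- by move=> i ki; rewrite -in_setI (CC i.+1) ?set11.
Qed.
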